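(* Let $v\in\mathrm{Box}(\Sigma)$, $\gamma^v$ as in the context, and $l\in\mathbb L$. Then the expression $x^v\prod_{j=1}^n\frac{z_j^{l_j+\gamma^v_j+D_j}}{\Gamma(l_j+\gamma^v_j+D_j+1)}$ vanishes in the completion of $\mathbb C[K,\Sigma]$ unless $l\in\mathcal S_\Sigma(\gamma^v)$.
   Context: $N\cong\mathbb Z^d$ lattice, $\mathcal A=\{v_1,\dots,v_n\}\subset N$ generating $N$ with a homomorphism $\mathrm h:N\to\mathbb Z$, $\mathrm h(v_j)=1$; $\mathbb L=\{l\in\mathbb Z^n:\sum l_jv_j=0\}$; $K=\mathbb R_{\ge0}\mathrm{Conv}(\mathcal A)$; $\Sigma$ the simplicial fan supported on $K$ from a regular triangulation of $\mathrm{Conv}(\mathcal A)$ with vertices in $\mathcal A$. $\mathbb C[K,\Sigma]$: basis $x^w$, $w\in K\cap N$, $x^{w_1}x^{w_2}=x^{w_1+w_2}$ if a cone of $\Sigma$ contains both, else $0$; graded by $\mathrm h$, completed w.r.t. this grading. $\mathrm{Box}(\Sigma)$: $v\in N$ with $v=\sum q^v_jv_j$, $0\le q^v_j<1$, $q^v_j=0$ unless $v_j$ spans a ray of one fixed maximal cone. Fix $\beta\in N$ and $\gamma^v\in\mathbb Q^n$ with $\sum\gamma^v_jv_j=\beta$, $\gamma^v_j-q^v_j\in\mathbb Z$. $D_j=x^{v_j}$ if $\mathbb R_{\ge0}v_j\in\Sigma$, else $D_j=0$; the factors $z_j^{a+D_j}/\Gamma(a+D_j+1)$ are understood as power series in $D_j$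 (Taylor expansion of $s\mapsto z_j^s/\Gamma(s+1)$ at $s=a$), $z_j\in\mathbb C^*$ with a chosen argument. For $\gamma\in\mathbb Q^n$ and $l\in\mathbb L$, $\mathrm{Supp}(l)=\{v_j:l_j+\gamma_j\notin\mathbb Z_{\ge0}\}$, and $\mathcal S_\Sigma(\gamma)$ is the set of $l\in\mathbb L$ such that all elements of $\mathrm{Supp}(l)$ generate rays of a single maximal cone of $\Sigma$. *)

From HB Require Import structures.
From mathcomp Require Import all_boot all_order all_algebra.
From mathcomp Require Import all_classical all_reals all_analysis.
From mathcomp Require Import complex.

Set Implicit Arguments.
Unset Strict Implicit.
Unset Printing Implicit Defensive.
Import Order.TTheory GRing.Theory Num.Theory.
Local Open Scope classical_set_scope.
Local Open Scope ring_scope.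

(** Lattice N = 'rV[int]_d.  [toR w] is the image of w in N (x) R = R^d. *)
Definition toR (R : realType) (d : nat) (w : 'rV[int]_d) : 'rV[R]_d :=
  map_mx (fun z : int => z%:~R) w.

Definition pairing (R : realType) (d : nat) (u x : 'rV[R]_d) : R :=
  \sum_(i < d) u 0 i * x 0 i.

Definition in_cone (R : realType) (d n : nat) (v : 'I_n -> 'rV[int]_d)
    (S : {set 'I_n}) (w : 'rV[int]_d) : Prop :=
  exists lam : 'I_n -> R,
    (forall j, 0 <= lam j) /\ (forall j, j \notin S -> lam j = 0) /\
    toR R w = \sum_(j < n) lam j *: toR R (v j).

Definition inKN (R : realType) (d n : nat) (v : 'I_n -> 'rV[int]_d)
    (w : 'rV[int]_d) : Prop := in_cone R v [set: 'I_n] w.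

(** [is_cell v om S] : S is (the index set of) a cell of the regular
    subdivision of Conv(A) induced by the heights om : 'I_n -> R, i.e. the
    set of points of A lying on a lower face of the lifted configuration.
    (Since h(v_j) = 1 for all j, affine functionals on the hyperplane h = 1
    are restrictions of linear functionals u.) *)
Definition is_cell (R : realType) (d n : nat) (v : 'I_n -> 'rV[int]_d)
    (om : 'I_n -> R) (S : {set 'I_n}) : Prop :=
  exists u : 'rV[R]_d,
    forall j, pairing u (toR R (v j)) <= om j /\
              (pairing u (toR R (v j)) = om j <-> j \in S).

(** the regular subdivision induced by om is a triangulation: all its cells
    are simplices (linearly independent, equivalently affinely independent
    since h(v_j)=1). *)
Definition is_regular_triangulation (R : realType) (d n : nat)
    (v : 'I_n -> 'rV[int]_d) (om : 'I_n -> R) : Prop :=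
  forall S, is_cell v om S ->
    forall lam : 'I_n -> R, (forall j, j \notin S -> lam j = 0) ->
      \sum_(j < n) lam j *: toR R (v j) = 0 -> forall j, lam j = 0.

Definition is_max_cell (R : realType) (d n : nat) (v : 'I_n -> 'rV[int]_d)
    (om : 'I_n -> R) (S : {set 'I_n}) : Prop :=
  is_cell v om S /\ forall T, is_cell v om T -> S \subset T -> T = S.

Definition is_ray (R : realType) (d n : nat) (v : 'I_n -> 'rV[int]_d)
    (om : 'I_n -> R) (j : 'I_n) : Prop := is_cell v om [set j].

Definition common_cone (R : realType) (d n : nat) (v : 'I_n -> 'rV[int]_d)
    (om : 'I_n -> R) (w1 w2 : 'rV[int]_d) : Prop :=
  exists S, is_cell v om S /\ in_cone R v S w1 /\ in_cone R v S w2.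

(** * The completion of C[K, Sigma]
    An element of the completion (w.r.t. the h-grading) is a formal series
    sum_{w in K cap N} c_w x^w, represented by its coefficient function
    N -> C (coefficients outside K cap N are irrelevant/zero). *)
Definition cser (R : realType) (d : nat) := 'rV[int]_d -> R[i].

Definition mono (R : realType) (d : nat) (w : 'rV[int]_d) : cser R d :=
  fun u => if u == w then 1 else 0.

Definition cone1 (R : realType) (d : nat) : cser R d := @mono R d 0.

(** product in the completion of C[K,Sigma]: bilinear extension of
    x^w1 x^w2 = x^(w1+w2) if a cone of Sigma contains both, 0 otherwise.
    (For each w the index set is finite, as h > 0 on K \ 0.) *)
Definition cmul (R : realType) (d n : nat) (v : 'I_n -> 'rV[int]_d)
    (om : 'I_n -> R) (f g : cser R d) : cser R d :=
  fun w => \sum_(p \in [set p : 'rV[int]_d * 'rV[int]_d |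
                    p.1 + p.2 = w /\ inKN R v p.1 /\ inKN R v p.2 /\
                    common_cone v om p.1 p.2]) (f p.1 * g p.2).

Definition cpow (R : realType) (d n : nat) (v : 'I_n -> 'rV[int]_d)
    (om : 'I_n -> R) (f : cser R d) (k : nat) : cser R d :=
  iter k (cmul v om f) (@cone1 R d).

(** the power series sum_k c_k f^k in the completion (f of positive degree,
    so for each w only finitely many terms contribute to the coefficient of
    x^w; this coefficient is the finite-support sum). *)
Definition pseries (R : realType) (d n : nat) (v : 'I_n -> 'rV[int]_d)
    (om : 'I_n -> R) (c : nat -> R[i]) (f : cser R d) : cser R d :=
  fun w => \sum_(k \in [set: nat]) (c k * cpow v om f k w).

Definition Dj (R : realType) (d n : nat) (v : 'I_n -> 'rV[int]_d)
    (om : 'I_n -> R) (j : 'I_n) : cser R d :=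
  fun u => if `[< is_ray v om j >] then @mono R d (v j) u else 0.

(** Euler's integral, for x > 0 *)
Definition Gamma (R : realType) (x : R) : R :=
  fine (\int[@lebesgue_measure R]_(t in `]0%R, +oo[%classic)
          ((t `^ (x - 1)) * expR (- t))%:E)%E.

(** the entire function 1/Gamma on the real line, via
    1/Gamma(x) = x (x+1) ... (x+N-1) / Gamma(x+N) for any N with x+N > 0 *)
Definition rGamma (R : realType) (x : R) : R :=
  let N := (Num.truncn `|x|).+1 in
  (\prod_(i < N) (x + i%:R)) / Gamma (x + N%:R).

(** z = r e^{i theta} with r > 0 and chosen argument theta; z^s := exp(s log z)
    with log z = ln r + i theta.  Real and imaginary parts of the function
    s |-> z^s / Gamma(s+1) for real s. *)
Definition zsG_re (R : realType) (r theta s : R) : R :=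
  expR (s * ln r) * cos (s * theta) * rGamma (s + 1).
Definition zsG_im (R : realType) (r theta s : R) : R :=
  expR (s * ln r) * sin (s * theta) * rGamma (s + 1).

(** k-th Taylor coefficient at s = a of s |-> z^s / Gamma(s+1)
    (an entire function; for real a its complex Taylor coefficients are
    those computed along the real line). *)
Definition taylor_zG (R : realType) (r theta a : R) (k : nat) : R[i] :=
  Complex (derive1n k (zsG_re r theta) a / k`!%:R)
          (derive1n k (zsG_im r theta) a / k`!%:R).

(** the factor z_j^{a + D_j} / Gamma(a + D_j + 1) as an element of the
    completion *)
Definition zG_factor (R : realType) (d n : nat) (v : 'I_n -> 'rV[int]_d)
    (om : 'I_n -> R) (r theta a : R) (j : 'I_n) : cser R d :=
  pseries v om (taylor_zG r theta a) (Dj v om j).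

(** v \in Box(Sigma), witnessed by q and the maximal cone S *)
Definition box_witness (R : realType) (d n : nat) (v : 'I_n -> 'rV[int]_d)
    (om : 'I_n -> R) (w : 'rV[int]_d) (q : 'I_n -> rat) (S : {set 'I_n}) : Prop :=
  is_max_cell v om S /\
  (forall j, 0 <= q j < 1) /\ (forall j, j \notin S -> q j = 0) /\
  toR R w = \sum_(j < n) ratr (q j) *: toR R (v j).

Definition in_L (d n : nat) (v : 'I_n -> 'rV[int]_d) (l : 'I_n -> int) : Prop :=
  \sum_(j < n) (v j) *~ l j = 0.

Definition in_Supp (n : nat) (gam : 'I_n -> rat) (l : 'I_n -> int) (j : 'I_n) : Prop :=
  ~ (exists m : nat, (l j)%:~R + gam j = m%:R).

Definition in_S_Sigma (R : realType) (d n : nat) (v : 'I_n -> 'rV[int]_d)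
    (om : 'I_n -> R) (gam : 'I_n -> rat) (l : 'I_n -> int) : Prop :=
  in_L v l /\ exists T, is_max_cell v om T /\ forall j, in_Supp gam l j -> j \in T.

From Pilot Require Import Defs.
From HB Require Import structures.
From mathcomp Require Import all_boot all_order all_algebra.
From mathcomp Require Import all_classical all_reals all_analysis.
From mathcomp Require Import complex.
From mathcomp Require Import zify.

Set Implicit Arguments.
Unset Strict Implicit.
Unset Printing Implicit Defensive.
Import Order.TTheory GRing.Theory Num.Theory.
Local Open Scope classical_set_scope.
Local Open Scope ring_scope.

(* A nonzero coefficient of the product comes from monomials x^w and x^(m_j v_j)
   lying in one cone C of the fan.  The constant term (m_j = 0) of the j-th
   factor is z_j^a / Gamma(a + 1), which vanishes when a = l_j + gamma_j is a
   negative integer, so every such j has m_j > 0.  A lattice point of the cone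
   of a cell can only be written, with nonnegative coefficients supported on a
   cell, using generators of that cell; hence C contains every j with q_j > 0
   and every j with m_j > 0, which together cover Supp(l), and C lies in a
   maximal cell. *)

Section Support.
Variables (R : realType) (d n : nat) (v : 'I_n -> 'rV[int]_d) (om : 'I_n -> R).

Lemma mono_supp (w u : 'rV[int]_d) : @mono R d w u <> 0 -> u = w.
Proof. by rewrite /mono; case: eqP. Qed.

Lemma cmul_supp (f g : cser R d) u : cmul v om f g u <> 0 ->
  exists p1 p2, [/\ p1 + p2 = u, common_cone v om p1 p2, f p1 <> 0 & g p2 <> 0].
Proof.
apply: contra_notP => nsupp; rewrite /cmul fsbig1 // => -[p1 p2] /= [pu [_ [_ cc]]].
have [->|f0] := eqVneq (f p1) 0; first by rewrite mul0r.
have [->|g0] := eqVneq (g p2) 0; first by rewrite mulr0.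
by exfalso; apply: nsupp; exists p1, p2; split => //; apply/eqP.
Qed.

Lemma pseries_supp c (f : cser R d) u : Defs.pseries v om c f u <> 0 ->
  exists k, c k <> 0 /\ cpow v om f k u <> 0.
Proof.
apply: contra_notP => nsupp; rewrite /Defs.pseries fsbig1 // => k _.
have [->|c0] := eqVneq (c k) 0; first by rewrite mul0r.
have [->|p0] := eqVneq (cpow v om f k u) 0; first by rewrite mulr0.
by exfalso; apply: nsupp; exists k; split; apply/eqP.
Qed.

Lemma cpow_Dj_supp j k u : cpow v om (Dj v om j) k u <> 0 ->
  u = v j *+ k /\ ((0 < k)%N -> is_ray v om j).
Proof.
elim: k u => [|k IHk] u; first by move/mono_supp.
move=> /cmul_supp [p1 [p2 [<- _ Dp1 /IHk [-> _]]]].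
move: Dp1; rewrite /Dj; case: asboolP => // ray /mono_supp ->.
by rewrite mulrS.
Qed.

End Support.

Section CellCoordinates.
Variables (R : realType) (d n : nat) (v : 'I_n -> 'rV[int]_d) (om : 'I_n -> R).

Lemma toRD (a b : 'rV[int]_d) : toR R (a + b) = toR R a + toR R b.
Proof. exact: map_mxD. Qed.

Lemma toR0 : toR R (0 : 'rV[int]_d) = 0.
Proof. by apply/matrixP => i j; rewrite !mxE. Qed.

Lemma toRMn (a : 'rV[int]_d) m : toR R (a *+ m) = m%:R *: toR R a.
Proof. by apply/matrixP => i j; rewrite !mxE mulmxnE rmorphMn mulr_natl. Qed.

Lemma pairing_sum (u : 'rV[R]_d) (c : 'I_n -> R) (x : 'I_n -> 'rV[R]_d) :
  pairing u (\sum_(j < n) c j *: x j) = \sum_(j < n) c j * pairing u (x j).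
Proof.
rewrite /pairing; under eq_bigr do rewrite summxE mulr_sumr.
rewrite exchange_big /=; apply: eq_bigr => j _; rewrite mulr_sumr.
by apply: eq_bigr => i _; rewrite mxE mulrCA.
Qed.

Definition lifted_height (mu : 'I_n -> R) : R := \sum_(j < n) mu j * om j.

Lemma pairing_cone_le (u : 'rV[R]_d) (mu : 'I_n -> R) :
  (forall j, pairing u (toR R (v j)) <= om j) -> (forall j, 0 <= mu j) ->
  pairing u (\sum_(j < n) mu j *: toR R (v j)) <= lifted_height mu.
Proof.
move=> u_le mu_ge0; rewrite pairing_sum.
by apply: ler_sum => j _; apply: ler_wpM2l.
Qed.

Lemma pairing_cone_eq (u : 'rV[R]_d) (C : {set 'I_n}) (mu : 'I_n -> R) :
  (forall j, j \in C -> pairing u (toR R (v j)) = om j) ->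
  (forall j, j \notin C -> mu j = 0) ->
  pairing u (\sum_(j < n) mu j *: toR R (v j)) = lifted_height mu.
Proof.
move=> u_eq mu_supp; rewrite pairing_sum; apply: eq_bigr => j _.
by have [/u_eq ->|/mu_supp ->] := boolP (j \in C); rewrite ?mul0r.
Qed.

Definition cell_coords (p : 'rV[int]_d) (mu : 'I_n -> R) : Prop :=
  [/\ forall j, 0 <= mu j,
      exists2 C, is_cell v om C & forall j, j \notin C -> mu j = 0
    & toR R p = \sum_(j < n) mu j *: toR R (v j)].

(* The supporting functional of each cell bounds the lifted height of the other
   representation by its own, so both heights agree; [mu] then vanishes off C,
   where the functional of C lies strictly below [om]. *)
Lemma cell_coords_supp (C : {set 'I_n}) p mu :
  is_cell v om C -> in_cone R v C p -> cell_coords p mu ->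
  forall j, j \notin C -> mu j = 0.
Proof.
move=> [u Hu] [lam [lam_ge0 [lam_supp Elam]]] [mu_ge0 [C1 [u1 Hu1] mu_supp] Emu].
have u_le j : pairing u (toR R (v j)) <= om j by case: (Hu j).
have u1_le j : pairing u1 (toR R (v j)) <= om j by case: (Hu1 j).
have u_eq j : j \in C -> pairing u (toR R (v j)) = om j by case: (Hu j) => _ /[apply].
have u1_eq j : j \in C1 -> pairing u1 (toR R (v j)) = om j by case: (Hu1 j) => _ /[apply].
have Hlam : pairing u (toR R p) = lifted_height lam.
  by rewrite Elam (pairing_cone_eq u_eq lam_supp).
have same_height : lifted_height mu = lifted_height lam.
  apply/le_anti/andP; split.
    rewrite -(pairing_cone_eq u1_eq mu_supp) -Emu Elam.
    exact: pairing_cone_le.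
  by rewrite -Hlam Emu; apply: pairing_cone_le.
have gap0 : \sum_(j < n) mu j * (om j - pairing u (toR R (v j))) = 0.
  under eq_bigr do rewrite mulrBr.
  by rewrite sumrB -pairing_sum -Emu Hlam -/(lifted_height mu) same_height subrr.
have gap_ge0 i : true -> 0 <= mu i * (om i - pairing u (toR R (v i))).
  by move=> _; rewrite mulr_ge0 // subr_ge0.
move=> j jC; have /eqP := psumr_eq0P gap_ge0 gap0 (i := j) isT.
rewrite mulf_eq0 subr_eq0 => /orP [/eqP //|/eqP E].
by case: (Hu j) => _ /iffLR; rewrite E => /(_ erefl); rewrite (negbTE jC).
Qed.

Lemma cell_coordsD p1 p2 mu1 mu2 :
  common_cone v om p1 p2 -> cell_coords p1 mu1 -> cell_coords p2 mu2 ->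
  cell_coords (p1 + p2) (mu1 \+ mu2).
Proof.
move=> [C [cC [p1C p2C]]] mu1c mu2c.
case: (mu1c) (mu2c) => [mu1_ge0 _ E1] [mu2_ge0 _ E2]; split.
- by move=> j; apply: addr_ge0.
- exists C => // j jC.
  by rewrite /= (cell_coords_supp cC p1C mu1c jC) (cell_coords_supp cC p2C mu2c jC) addr0.
- by rewrite toRD E1 E2 -big_split; apply: eq_bigr => j _; rewrite scalerDl.
Qed.

Lemma cell_coords0 C0 : is_cell v om C0 -> cell_coords 0 (fun=> 0).
Proof.
move=> cC0; split => //; first by exists C0.
by rewrite toR0 big1 // => j _; rewrite scale0r.
Qed.

Lemma cell_coords_ray_multiple C0 k m : is_cell v om C0 ->
  ((0 < m)%N -> is_ray v om k) ->
  cell_coords (v k *+ m) (fun j => (j == k)%:R * m%:R).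
Proof.
move=> cC0 ray; have [->|m_gt0] := posnP m.
  rewrite mulr0n (_ : (fun j => _) = fun=> 0); first exact: cell_coords0 cC0.
  by apply/funext => j; rewrite mulr0.
split.
- by move=> j; apply: mulr_ge0.
- exists [set k]%SET; first exact: ray.
  by move=> j; rewrite inE => /negbTE ->; rewrite mul0r.
- rewrite toRMn (bigD1 k) //= eqxx mul1r big1 ?addr0 // => j /negbTE ->.
  by rewrite mul0r scale0r.
Qed.

Lemma cell_sub_max_cell C : is_cell v om C ->
  exists2 T, is_max_cell v om T & C \subset T.
Proof.
move=> cC; have [T /maxsetP [/asboolP cT maxT] CT] :=
  @maxset_exists _ (fun C => `[< is_cell v om C >]) C (asboolT cC).
exists T => //; split => // T' cT'; apply: maxT; exact/asboolP.
Qed.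

End CellCoordinates.

Section ProductSupport.
Variables (R : realType) (d n : nat) (v : 'I_n -> 'rV[int]_d) (om : 'I_n -> R).

Definition supp_on_ray (f : cser R d) (j : 'I_n) (no_const_term : Prop) : Prop :=
  forall u, f u <> 0 -> exists m : nat,
    [/\ u = v j *+ m, (0 < m)%N -> is_ray v om j & no_const_term -> (0 < m)%N].

Lemma big_cmul_cell_coords (F : 'I_n -> cser R d) (P : 'I_n -> Prop) C0 :
  is_cell v om C0 -> (forall j, supp_on_ray (F j) j (P j)) ->
  forall s u, (\big[cmul v om / @cone1 R d]_(j <- s) F j) u <> 0 ->
  exists2 mu, cell_coords v om u mu & forall j, j \in s -> P j -> 0 < mu j.
Proof.
move=> cC0 F_supp; elim=> [|k s IHs] u.
  by rewrite big_nil => /mono_supp ->; exists (fun=> 0) => //; apply: cell_coords0 cC0.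
rewrite big_cons => /cmul_supp [p1 [p2 [<- cc Fp1 /IHs [mu mu_c mu_pos]]]].
have [m [p1E ray Pm]] := F_supp _ _ Fp1; subst p1.
have dk_c := cell_coords_ray_multiple cC0 ray.
exists ((fun j => (j == k)%:R * m%:R) \+ mu); first exact: cell_coordsD cc dk_c mu_c.
have [mu_ge0 _ _] := mu_c.
move=> j; rewrite in_cons => /orP [/eqP -> /Pm m_gt0|js Pj] /=.
  by rewrite eqxx mul1r ltr_pwDl ?ltr0n.
by rewrite ltr_wpDl ?mu_pos // mulr_ge0.
Qed.

End ProductSupport.

Lemma rGamma_Nnat (R : realType) (k : nat) : rGamma (- (k%:R : R)) = 0.
Proof.
rewrite /rGamma normrN normr_nat natrK.
by rewrite (bigD1 (Ordinal (ltnSn k))) //= addNr !mul0r.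
Qed.

Lemma taylor_zG0_Nint (R : realType) (r theta : R) (t : int) :
  t < 0 -> taylor_zG r theta t%:~R 0 = 0.
Proof.
move=> t_lt0; rewrite /taylor_zG /= /zsG_re /zsG_im.
have -> : (t%:~R : R) + 1 = - (absz (t + 1))%:R.
  by rewrite natr_absz ler0_norm ?mulrNz ?opprK ?intrD //; lia.
by rewrite rGamma_Nnat !mulr0 !mul0r.
Qed.

Lemma zG_factor_supp (R : realType) (d n : nat) (v : 'I_n -> 'rV[int]_d)
    (om : 'I_n -> R) (r theta a : R) (j : 'I_n) :
  supp_on_ray v om (zG_factor v om r theta a j) j
    (exists2 t : int, t < 0 & a = t%:~R).
Proof.
move=> u /pseries_supp [k [ck /cpow_Dj_supp [-> ray]]].
exists k; split => // -[t t_lt0 a_t]; rewrite lt0n; apply: contra_notN ck => /eqP ->.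
by rewrite a_t taylor_zG0_Nint.
Qed.
Arguments zG_factor_supp {R d n} v om r theta a j.

Lemma box_cell_coords (R : realType) (d n : nat) (v : 'I_n -> 'rV[int]_d)
    (om : 'I_n -> R) w q S :
  box_witness v om w q S -> cell_coords v om w (fun j => ratr (q j)).
Proof.
move=> [[cS _] [q01 [qS Ew]]]; split => //.
- by move=> j; rewrite ler0q; case/andP: (q01 j).
- by exists S => // j /qS ->; rewrite rmorph0.
Qed.

Lemma in_Supp_cases (R : realType) (n : nat) (gam q : 'I_n -> rat) (l : 'I_n -> int) j :
  0 <= q j -> (exists z : int, gam j - q j = z%:~R) -> in_Supp gam l j ->
  0 < q j \/ exists2 t : int, t < 0 & (l j)%:~R + ratr (gam j) = t%:~R :> R.
Proof.
rewrite le_eqVlt => /orP [/eqP q0 [z]|]; last by left.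
rewrite -q0 subr0 => gam_z notSupp; right.
have [t_lt0|t_ge0] := ltP (l j + z) 0.
  by exists (l j + z) => //; rewrite gam_z ratr_int intrD.
by exfalso; apply: notSupp; exists (absz (l j + z)); rewrite gam_z -intrD natr_absz ger0_norm.
Qed.

Theorem proposition2p5 (R : realType) (d n : nat)
  (v : 'I_n -> 'rV[int]_d) (h : 'rV[int]_d -> int) (om : 'I_n -> R)
  (beta : 'rV[int]_d) (r theta : 'I_n -> R)
  (w : 'rV[int]_d) (q : 'I_n -> rat) (S : {set 'I_n})
  (gam : 'I_n -> rat) (l : 'I_n -> int) :
  injective v ->
  (forall x y, h (x + y) = h x + h y) ->
  (forall j, h (v j) = 1) ->
  (forall x : 'rV[int]_d, exists c : 'I_n -> int, x = \sum_(j < n) v j *~ c j) ->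
  is_regular_triangulation v om ->
  (forall j, 0 < r j) ->
  box_witness v om w q S ->
  toR R beta = \sum_(j < n) ratr (gam j) *: toR R (v j) ->
  (forall j, exists z : int, gam j - q j = z%:~R) ->
  in_L v l ->
  ~ in_S_Sigma v om gam l ->
  cmul v om (@mono R d w)
    (\big[cmul v om / @cone1 R d]_(j < n)
        zG_factor v om (r j) (theta j) ((l j)%:~R + ratr (gam j)) j)
  = (fun _ => 0).
Proof.
move=> _ _ _ _ _ _ box _ gam_q l_in notS.
have [[cS _] [q01 _]] := box.
have q_ge0 j : 0 <= q j by case/andP: (q01 j).
apply/funext => u; apply: contrapT => /cmul_supp [p1 [p2 [_ cc /mono_supp p1w prod]]].
subst p1; have [C [cC [wC p2C]]] := cc.
have [mu mu_c mu_pos] :=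
  big_cmul_cell_coords cS (fun j => zG_factor_supp v om (r j) (theta j) _ j) prod.
have [T maxT CT] := cell_sub_max_cell cC.
apply: notS; split => //; exists T; split => // j.
move=> /(in_Supp_cases R (q_ge0 j) (gam_q j)) supp_j.
apply: (fintype.subsetP CT); apply: contraT => jC; case: supp_j => [q_gt0|[t t_lt0 a_t]].
- have := cell_coords_supp cC wC (box_cell_coords box) jC.
  by move/eqP; rewrite fmorph_eq0 (gt_eqF q_gt0).
- have := cell_coords_supp cC p2C mu_c jC.
  by move/eqP; rewrite (gt_eqF (mu_pos j (mem_index_enum j) (ex_intro2 _ _ t t_lt0 a_t))).
Qed.
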